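(* For every $n\ge1$, there is a bijection between the set of walks of length $2n-2$ in the path graph $P_7$ that start and end at the middle vertex $v_4$ and the set of rectangular permutations in $S_n$.
   Context: $P_7$ is the path graph with vertices $v_1,\dots,v_7$ and edges $v_iv_{i+1}$ for $1\le i\le 6$. A walk of length $\ell$ is a sequence of vertices $w_0,w_1,\dots,w_\ell$ with $w_{j-1}$ and $w_j$ adjacent for all $j$. A permutation is rectangular if it avoids the patterns $2413$, $2431$, $4213$ and $4231$. *)

From mathcomp Require Import all_boot all_order all_fingroup.
Set Implicit Arguments. Unset Strict Implicit. Unset Printing Implicit Defensive.

(* Vertices of P_7: v_1,...,v_7 are represented by 0,...,6 : 'I_7,
   i.e. v_i is the ordinal of value i-1.  Edges: v_i v_(i+1). *)
Definition P7_adj (a b : 'I_7) : bool := (a.+1 == b :> nat) || (b.+1 == a :> nat).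

Definition v4 : 'I_7 := inord 3.

(* A walk of length l is a sequence w_0, ..., w_l of vertices, encoded as a
   finite function 'I_l.+1 -> 'I_7, with consecutive vertices adjacent. *)
Definition is_walk (l : nat) (w : {ffun 'I_l.+1 -> 'I_7}) : bool :=
  [forall j : 'I_l, P7_adj (w (widen_ord (leqnSn l) j)) (w (lift ord0 j))].

Definition closed_walk_v4 (l : nat) (w : {ffun 'I_l.+1 -> 'I_7}) : bool :=
  [&& is_walk w, w ord0 == v4 & w ord_max == v4].

(* Classical pattern containment: s : S_n contains the pattern p
   (a permutation of {1..k} written in one-line notation as a list)
   if there are positions f 0 < ... < f (k-1) whose values are
   order-isomorphic to p. *)
Definition contains_pattern (n : nat) (s : 'S_n) (p : seq nat) : bool :=
  [exists f : {ffun 'I_(size p) -> 'I_n},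
     [forall a : 'I_(size p), forall b : 'I_(size p),
        (a < b) ==> (f a < f b)] &&
     [forall a : 'I_(size p), forall b : 'I_(size p),
        (s (f a) < s (f b)) == (nth 0 p a < nth 0 p b)]].

Definition avoids (n : nat) (s : 'S_n) (p : seq nat) : bool :=
  ~~ contains_pattern s p.

Definition rectangular (n : nat) (s : 'S_n) : bool :=
  [&& avoids s [:: 2; 4; 1; 3], avoids s [:: 2; 4; 3; 1],
      avoids s [:: 4; 2; 1; 3] & avoids s [:: 4; 2; 3; 1]].

(* Both sides are counted.  Grouping the steps of a walk in pairs shows that the
   closed walks at v_4 of length 2m satisfy a(m+2) = 4 a(m+1) - 2 a(m).  On the
   other side, s is rectangular iff for every t the set of values at positions
   >= t never alternates in, out, in, out with its complement along [0, n).
   Such a set is a block of consecutive values followed, after a gap, by a final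
   segment [c, n); counting the ways to empty it one value at a time while
   staying in this family gives the triangle [block_count], whose column 0
   satisfies the same recurrence with the same initial values 1, 2. *)

From mathcomp Require Import all_boot all_order all_fingroup zify.
Set Implicit Arguments. Unset Strict Implicit. Unset Printing Implicit Defensive.

Lemma card_eq_bijective (T1 T2 : finType) :
  #|T1| = #|T2| -> exists f : T1 -> T2, bijective f.
Proof.
move=> eT; pose f x := enum_val (cast_ord eT (enum_rank x)).
have f_inj : injective f.
  exact: inj_comp enum_val_inj (inj_comp (cast_ord_inj (eq_n:=eT)) enum_rank_inj).
by exists f; apply: inj_card_bij f_inj _; rewrite eT.
Qed.

Lemma card_preim_count (T : finType) (U : eqType) (f : T -> U) (S : seq U)
    (P : pred U) :
  injective f -> (forall x, f x \in S) -> size S <= #|T| ->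
  #|[pred x | P (f x)]| = count P S.
Proof.
move=> f_inj fS leST.
have uniq_fT : uniq (map f (enum T)) by rewrite map_inj_uniq ?enum_uniq.
have sub_fT : {subset map f (enum T) <= S} by move=> _ /mapP [x _ ->]; exact: fS.
have leS : size S <= size (map f (enum T)) by rewrite size_map -cardT.
have [_ eq_fT] := uniq_min_size uniq_fT sub_fT leS.
have uniqS := leq_size_uniq uniq_fT sub_fT leS.
rewrite -(seq.permP (uniq_perm uniq_fT uniqS eq_fT)) count_map.
by rewrite cardE /enum_mem size_filter filter_predT.
Qed.

Lemma count_allpairs_cons (T : Type) (s : seq T) (t : T -> seq (seq T))
    (P : pred (seq T)) :
  count P [seq x :: w | x <- s, w <- t x] =
  \sum_(x <- s) count (fun w => P (x :: w)) (t x).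
Proof.
by rewrite count_flatten sumnE !big_map; apply: eq_bigr => x _; rewrite count_map.
Qed.

Lemma sum_nat_first (f : nat -> nat) m n : m < n ->
  (forall x, m < x < n -> f x = 0) -> \sum_(m <= x < n) f x = f m.
Proof.
move=> lt_mn f0; rewrite big_ltn // big_nat_cond big1 ?addn0 // => x.
by rewrite andbT => /f0.
Qed.

Lemma sum_nat_ends (f : nat -> nat) m n v : m < n -> f m = v -> f n.-1 = v ->
  (forall x, m < x < n.-1 -> f x = 0) ->
  \sum_(m <= x < n) f x = (if n == m.+1 then 1 else 2) * v.
Proof.
move=> lt_mn fm fn f0; have [-> | ne_n] := eqVneq n m.+1.
  by rewrite big_nat1 fm mul1n.
have le_mn' : m < n.-1 by lia.
rewrite -(ltn_predK lt_mn) big_nat_recr ?(ltnW le_mn') //= sum_nat_first // fm fn; lia.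
Qed.

Lemma eq_rec_4_2 (u v : nat -> nat) : u 0 = v 0 -> u 1 = v 1 ->
  (forall m, u m.+2 + 2 * u m = 4 * u m.+1) ->
  (forall m, v m.+2 + 2 * v m = 4 * v m.+1) -> u =1 v.
Proof.
move=> u0 u1 urec vrec m; suff [] : u m = v m /\ u m.+1 = v m.+1 by [].
elim: m => [|m [IHm IHm1]] //; split=> //.
by have := urec m; have := vrec m; lia.
Qed.

Fixpoint words (T : Type) (s : seq T) (k : nat) : seq (seq T) :=
  if k is k'.+1 then [seq x :: w | x <- s, w <- words s k'] else [:: [::]].

Lemma size_words (T : Type) (s : seq T) k : size (words s k) = size s ^ k.
Proof. by elim: k => //= k IHk; rewrite size_allpairs IHk expnS. Qed.

Lemma count_words_succ (T : Type) (s : seq T) k (P : pred (seq T)) :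
  count P (words s k.+1) = \sum_(x <- s) count (fun w => P (x :: w)) (words s k).
Proof. exact: count_allpairs_cons. Qed.

Lemma mem_words (T : eqType) (s : seq T) k w :
  (w \in words s k) = (size w == k) && all (mem s) w.
Proof.
elim: k w => [|k IHk] w; first by case: w.
apply/allpairsP/idP => [[[x v] /= [sx]] | ].
  by rewrite IHk => /andP [/eqP <- vs] ->; rewrite /= eqxx sx.
case: w => [|x w] //= /andP [sw /andP [sx ws]].
by exists (x, w); rewrite IHk -(eqSS (size w)) sw ws.
Qed.

Definition word_of (k m : nat) (f : 'I_k -> 'I_m) : seq nat :=
  [seq val (f i) | i <- enum 'I_k].

Lemma size_word_of k m (f : 'I_k -> 'I_m) : size (word_of f) = k.
Proof. by rewrite size_map size_enum_ord. Qed.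

Lemma nth_word_of k m (f : 'I_k -> 'I_m) (i : 'I_k) : nth 0 (word_of f) i = f i.
Proof. by rewrite (nth_map i) ?size_enum_ord // nth_ord_enum. Qed.

Lemma word_of_inj k m (f g : 'I_k -> 'I_m) : word_of f = word_of g -> f =1 g.
Proof. by move=> efg i; apply: val_inj; rewrite /= -!nth_word_of efg. Qed.

Lemma word_of_in_words k m (f : 'I_k -> 'I_m) : word_of f \in words (iota 0 m) k.
Proof.
rewrite mem_words size_word_of eqxx; apply/allP => _ /mapP [i _ ->].
by rewrite inE mem_iota ltn_ord.
Qed.

Definition adj_nat (a b : nat) : bool := (a.+1 == b) || (b.+1 == a).

Fixpoint walks_to_v4 (k u : nat) : nat :=
  if k is k'.+1 then
    (if u is u'.+1 then walks_to_v4 k' u' else 0) +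
    (if u < 6 then walks_to_v4 k' u.+1 else 0)
  else u == 3.

Lemma count_walks_to_v4 k u : u < 7 ->
  count (fun w => path adj_nat u w && (last u w == 3)) (words (iota 0 7) k) =
  walks_to_v4 k u.
Proof.
elim: k u => [|k IHk] u lt_u7; first by rewrite /= addn0; case: (u == 3).
rewrite count_words_succ (eq_big_seq (fun x => adj_nat u x * walks_to_v4 k x));
  last first.
  move=> x; rewrite mem_iota => /andP [_ lt_x7]; rewrite -IHk //=.
  by case: (adj_nat u x); rewrite ?mul1n ?mul0n ?count_pred0.
rewrite /= !big_cons big_nil /adj_nat /=.
by do 7?[case: u lt_u7 => [|u] lt_u7]; rewrite /= ?muln0 ?mul0n ?mul1n ?addn0 ?add0n.
Qed.

Lemma walks_to_v4_rec k :
  walks_to_v4 k.+4 3 + 2 * walks_to_v4 k 3 = 4 * walks_to_v4 k.+2 3.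
Proof. rewrite /=; lia. Qed.

Definition closed_word (w : seq nat) : bool :=
  if w is x :: w' then [&& x == 3, path adj_nat x w' & last x w' == 3] else false.

Lemma closed_walk_v4_word l (w : {ffun 'I_l.+1 -> 'I_7}) :
  closed_walk_v4 w = closed_word (word_of w).
Proof.
have v4_3 : nat_of_ord v4 = 3 by rewrite /v4 inordK.
set x := val (w ord0); set w' := behead (word_of w).
have ew : word_of w = x :: w' by rewrite /w' /word_of enum_ordSl.
have size_w' : size w' = l by rewrite size_behead size_word_of.
have adj_nth (j : 'I_l) : P7_adj (w (widen_ord (leqnSn l) j)) (w (lift ord0 j)) =
    adj_nat (nth 0 (x :: w') j) (nth 0 w' j).
  rewrite /P7_adj -ew -(nth_word_of w (widen_ord _ j)).
  by rewrite -(nth_word_of w (lift ord0 j)) ew.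
have walk_path : is_walk w = path adj_nat x w'.
  apply/forallP/(pathP 0) => [walk_w i | path_w j]; last first.
    by rewrite adj_nth; apply: path_w; rewrite size_w'.
  by rewrite size_w' => lt_il; have := walk_w (Ordinal lt_il); rewrite adj_nth.
have last_w : last x w' = w ord_max.
  by rewrite (last_nth 0) -ew size_w' -[l]/(nat_of_ord (@ord_max l)) nth_word_of.
rewrite /closed_walk_v4 walk_path ew /= -!val_eqE /= v4_3 last_w.
by rewrite andbCA.
Qed.

Lemma card_closed_walks l :
  #|[pred w : {ffun 'I_l.+1 -> 'I_7} | closed_walk_v4 w]| = walks_to_v4 l 3.
Proof.
rewrite (eq_card (B := [pred w : {ffun 'I_l.+1 -> 'I_7} | closed_word (word_of w)]));
  last first.
  by move=> w; rewrite !inE closed_walk_v4_word.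
rewrite (card_preim_count (S := words (iota 0 7) l.+1)); first last.
- by rewrite size_words size_iota card_ffun !card_ord.
- exact: word_of_in_words.
- by move=> w1 w2 /word_of_inj/ffunP.
rewrite count_words_succ (bigD1_seq 3) ?iota_uniq // big1_seq ?addn0.
  by rewrite -count_walks_to_v4 //= addn0.
move=> x /andP [/negbTE x_3 _]; apply/eqP; rewrite -leqn0 leqNgt -has_count.
by apply/hasPn => w _; rewrite /= x_3.
Qed.

Definition interleaved n (C : seq nat) : bool :=
  [exists a : 'I_n, exists b : 'I_n, exists c : 'I_n, exists d : 'I_n,
    [&& a < b, b < c, c < d, (a : nat) \in C, (b : nat) \notin C,
        (c : nat) \in C & (d : nat) \notin C]].

Lemma interleavedP n C :
  reflect (exists a b c d, [/\ a < b, b < c, c < d, d < n &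
             [/\ a \in C, b \notin C, c \in C & d \notin C]])
          (interleaved n C).
Proof.
apply: (iffP existsP) => [[a /existsP [b /existsP [c /existsP [d]]]] | ].
  by case/and5P => ab bc cd aC /and3P [bC cC dC]; exists a, b, c, d.
move=> [a [b [c [d [ab bc cd lt_dn [aC bC cC dC]]]]]].
have lt_an : a < n by lia.
have lt_bn : b < n by lia.
have lt_cn : c < n by lia.
exists (Ordinal lt_an); apply/existsP; exists (Ordinal lt_bn).
apply/existsP; exists (Ordinal lt_cn); apply/existsP; exists (Ordinal lt_dn).
by rewrite /= ab bc cd aC bC cC dC.
Qed.

Lemma eq_interleaved n C C' : C =i C' -> interleaved n C = interleaved n C'.
Proof.
move=> eC; apply/interleavedP/interleavedP;
  move=> [a [b [c [d [ab bc cd lt_dn]]]]]; exists a, b, c, d;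
  by rewrite ?eC // -?eC.
Qed.

Lemma interleaved_nil n : interleaved n [::] = false.
Proof. by apply/interleavedP => [[a [b [c [d [_ _ _ _ []]]]]]]. Qed.

Fixpoint untangled n (v : seq nat) : bool :=
  ~~ interleaved n v && (if v is _ :: v' then untangled n v' else true).

Lemma untangledP n v :
  reflect (forall t, ~~ interleaved n (drop t v)) (untangled n v).
Proof.
elim: v => [|x v IHv] /=.
  by rewrite interleaved_nil; apply: ReflectT.
apply: (iffP andP) => [[xv /IHv v_ok] [|t] //= | v_ok].
by split; [exact: v_ok 0 | apply/IHv => t; exact: v_ok t.+1].
Qed.

Definition count_untangled n (C : seq nat) : nat :=
  count (untangled n) (permutations C).

Lemma count_untangled_nil n : count_untangled n [::] = 1.
Proof. by rewrite /count_untangled /= interleaved_nil. Qed.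

Lemma count_untangled_interleaved n C :
  interleaved n C -> count_untangled n C = 0.
Proof.
move=> iC; apply/eqP; rewrite -leqn0 leqNgt -has_count; apply/hasPn => v.
by rewrite mem_permutations => /perm_mem eCv; case: v eCv => [|x v] eCv /=;
  rewrite (eq_interleaved _ eCv) iC.
Qed.

Lemma count_untangled_cons n C : uniq C -> C != [::] -> ~~ interleaved n C ->
  count_untangled n C = \sum_(x <- C) count_untangled n (rem x C).
Proof.
move=> uC nC iC; rewrite /count_untangled.
rewrite (seq.permP (permutationsE _)) ?lt0n ?size_eq0 // undup_id //.
rewrite count_allpairs_cons; apply: eq_big_seq => x xC; apply: eq_in_count => v.
rewrite mem_permutations => vCx /=.
suff -> : interleaved n (x :: v) = interleaved n C by rewrite (negbTE iC).
apply/eq_interleaved/perm_mem; rewrite (permPr (perm_to_rem xC)).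
by rewrite perm_cons.
Qed.

Lemma eq_count_untangled n C C' : uniq C -> uniq C' -> C =i C' ->
  count_untangled n C = count_untangled n C'.
Proof.
by move=> uC uC' eC; apply/seq.permP/perm_permutations/uniq_perm.
Qed.

Definition blocks p q c n : seq nat := index_iota p q ++ index_iota c n.

Lemma mem_blocks p q c n x :
  (x \in blocks p q c n) = (p <= x < q) || (c <= x < n).
Proof. by rewrite mem_cat !mem_index_iota. Qed.

Lemma blocks_uniq p q c n : q <= c -> uniq (blocks p q c n).
Proof.
move=> le_qc; rewrite cat_uniq !iota_uniq andbT /=.
by apply/hasPn => x; rewrite !mem_index_iota; lia.
Qed.

Lemma interleaved_blocks p q c n : interleaved n (blocks p q c n) = false.
Proof.
by apply/interleavedP => [[a [b [d [e [ab bd de lt_en []]]]]]]; rewrite !mem_blocks; lia.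
Qed.

(* [block_count N a] counts the untangled orders of a block of [a] values
   followed, after a gap, by a final segment of [N - a] values; for [a = 0]
   the set is just a final segment (see [count_untangled_blocks]). *)
Fixpoint block_count (N a : nat) {struct N} : nat :=
  if N is N'.+1 then
    if a is a'.+1 then block_count N' a + (if a' == 0 then 1 else 2) * block_count N' a'
    else \sum_(j < N) block_count N' j
  else a == 0.

Lemma block_count_gt N a : N < a -> block_count N a = 0.
Proof.
elim: N a => [|N IHN] [|a] //= lt_Na.
by rewrite !IHN ?muln0 //; lia.
Qed.

Lemma mem_rem_blocks p q c n x y : q <= c ->
  (y \in rem x (blocks p q c n)) = (y != x) && ((p <= y < q) || (c <= y < n)).
Proof. by move=> le_qc; rewrite mem_rem_uniq ?blocks_uniq // inE mem_blocks. Qed.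

Section BlocksStep.

Variables n k : nat.
Hypothesis IHk : forall p q c, p <= q -> q <= c -> c <= n -> q - p + (n - c) = k ->
  count_untangled n (blocks p q c n) = block_count k (if q == c then 0 else q - p).

Lemma count_untangled_rem C x p q c : uniq C -> rem x C =i blocks p q c n ->
  p <= q -> q <= c -> c <= n -> q - p + (n - c) = k ->
  count_untangled n (rem x C) = block_count k (if q == c then 0 else q - p).
Proof.
move=> uC eC le_pq le_qc le_cn size_k.
by rewrite (eq_count_untangled _ (rem_uniq x uC) (blocks_uniq p n le_qc) eC) IHk.
Qed.

Lemma count_untangled_interval s : n - s = k.+1 ->
  count_untangled n (blocks s s s n) = block_count k.+1 0.
Proof.
move=> size_k; set C := blocks s s s n.
have uC : uniq C by apply: blocks_uniq.
have nC : C != [::] by rewrite -size_eq0 size_cat /index_iota !size_iota subnn size_k.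
rewrite count_untangled_cons ?interleaved_blocks // big_cat /= big_geq ?leqnn //= add0n.
rewrite (eq_big_nat _ _ (F2 := fun x => block_count k (x - s))); last first.
  move=> x /andP [le_sx lt_xn].
  have eC : rem x C =i blocks s x x.+1 n.
    by move=> y; rewrite mem_rem_blocks // mem_blocks; lia.
  by rewrite (count_untangled_rem uC eC) ?ltn_eqF //; lia.
rewrite -{1}[s]add0n big_addn size_k big_mkord.
by apply: eq_bigr => j _; rewrite addnK.
Qed.

Lemma count_untangled_two_blocks p q c : p < q -> q < c -> c <= n ->
  q - p + (n - c) = k.+1 ->
  count_untangled n (blocks p q c n) = block_count k.+1 (q - p).
Proof.
move=> lt_pq lt_qc le_cn size_k; set C := blocks p q c n.
have le_qc := ltnW lt_qc.
have uC : uniq C by apply: blocks_uniq.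
have nC : C != [::] by rewrite -size_eq0 size_cat /index_iota !size_iota; lia.
rewrite count_untangled_cons ?interleaved_blocks // big_cat.
(* Only p, q - 1 and c can be removed: any other value x leaves an
   interleaving (p, x, x + 1, q) or (p, q, c, x). *)
have upper : \sum_(c <= x < n) count_untangled n (rem x C) = block_count k (q - p).
  have [lt_cn | ge_cn] := ltnP c n; last first.
    by rewrite big_geq // block_count_gt //; lia.
  rewrite sum_nat_first // => [|x /andP [lt_cx lt_xn]].
    have eC : rem c C =i blocks p q c.+1 n.
      by move=> y; rewrite mem_rem_blocks // mem_blocks; lia.
    rewrite (count_untangled_rem uC eC) ?ltn_eqF //; lia.
  apply/count_untangled_interleaved/interleavedP; exists p, q, c, x.
  by rewrite !mem_rem_blocks //; split; [lia | lia | lia | lia | split; lia].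
have lower : \sum_(p <= x < q) count_untangled n (rem x C) =
    (if q == p.+1 then 1 else 2) * block_count k (q - p).-1.
  apply: sum_nat_ends => // [|| x /andP [lt_px lt_xq]].
  - have eC : rem p C =i blocks p.+1 q c n.
      by move=> y; rewrite mem_rem_blocks // mem_blocks; lia.
    rewrite (count_untangled_rem uC eC) ?ltn_eqF //; [congr block_count | ..]; lia.
  - have eC : rem q.-1 C =i blocks p q.-1 c n.
      by move=> y; rewrite mem_rem_blocks // mem_blocks; lia.
    rewrite (count_untangled_rem uC eC) ?ltn_eqF //; [congr block_count | ..]; lia.
  - apply/count_untangled_interleaved/interleavedP; exists p, x, x.+1, q.
    by rewrite !mem_rem_blocks //; split; [lia | lia | lia | lia | split; lia].
have [a ea] : exists a, q - p = a.+1 by exists (q - p).-1; lia.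
by rewrite lower upper ea /= addnC (_ : (q == p.+1) = (a == 0)) //; lia.
Qed.

End BlocksStep.

Lemma count_untangled_blocks n p q c : p <= q -> q <= c -> c <= n ->
  count_untangled n (blocks p q c n) =
  block_count (q - p + (n - c)) (if q == c then 0 else q - p).
Proof.
move=> le_pq le_qc le_cn; move Ek : (q - p + (n - c)) => k.
elim: k p q c le_pq le_qc le_cn Ek => [|k IHk] p q c le_pq le_qc le_cn size_k.
  have [eqp eqc] : q - p = 0 /\ n - c = 0 by lia.
  by rewrite /blocks /index_iota eqp eqc count_untangled_nil; case: ifP.
have [epq | ne_pq] := eqVneq p q.
  subst p; rewrite subnn if_same.
  rewrite (@eq_count_untangled _ _ (blocks c c c n)) ?blocks_uniq //.
    by rewrite (count_untangled_interval IHk) //; lia.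
  by move=> y; rewrite !mem_blocks; lia.
have [eqc | ne_qc] := eqVneq q c.
  subst q; rewrite (@eq_count_untangled _ _ (blocks p p p n)) ?blocks_uniq //.
    by rewrite (count_untangled_interval IHk) //; lia.
  by move=> y; rewrite !mem_blocks; lia.
by rewrite (count_untangled_two_blocks IHk) //; lia.
Qed.

Lemma block_count_succ0 N :
  block_count N.+1 0 = block_count N 0 + \sum_(1 <= j < N.+1) block_count N j.
Proof. by rewrite /= -(big_mkord xpredT) big_ltn. Qed.

Lemma block_count_succ N a : 0 < a ->
  block_count N.+1 a = block_count N a + (if a == 1 then 1 else 2) * block_count N a.-1.
Proof. by case: a. Qed.

Lemma block_count_row_sum N :
  \sum_(1 <= j < N.+2) block_count N.+1 j =
  block_count N 0 + 3 * \sum_(1 <= j < N.+1) block_count N j.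
Proof.
rewrite (eq_big_nat _ _ (F2 := fun j =>
    block_count N j + (if j == 1 then 1 else 2) * block_count N j.-1)); last first.
  by move=> j /andP [lt_0j _]; rewrite block_count_succ.
rewrite big_split big_nat_recr //= block_count_gt // addn0.
have -> : \sum_(1 <= j < N.+2) (if j == 1 then 1 else 2) * block_count N j.-1 =
    block_count N 0 + 2 * \sum_(1 <= j < N.+1) block_count N j.
  rewrite big_ltn // big_add1 /= mul1n big_distrr; congr (_ + _).
  by apply: eq_big_nat => j /andP [lt_0j _]; rewrite eqSS (negbTE (lt0n_neq0 lt_0j)).
lia.
Qed.

Lemma block_count_rec N :
  block_count N.+2 0 + 2 * block_count N 0 = 4 * block_count N.+1 0.
Proof.
have := block_count_succ0 N; have := block_count_succ0 N.+1.
have := block_count_row_sum N; lia.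
Qed.

Lemma walks_to_v4_block_count m : walks_to_v4 (2 * m) 3 = block_count m.+1 0.
Proof.
apply: (@eq_rec_4_2 (fun m => walks_to_v4 (2 * m) 3) (fun m => block_count m.+1 0))
  => [||k|k].
- by rewrite /= big_ord_recr big_ord0.
- by rewrite /= !big_ord_recr !big_ord0.
- by rewrite !mulnS !add2n walks_to_v4_rec.
- exact: block_count_rec.
Qed.

Lemma word_of_perm_in_permutations n (s : 'S_n) : word_of s \in permutations (iota 0 n).
Proof.
rewrite mem_permutations; apply: uniq_perm; rewrite ?iota_uniq //.
  by rewrite map_inj_uniq ?enum_uniq // => i j /val_inj/perm_inj.
move=> x; rewrite mem_iota /=; apply/mapP/idP => [[i _ ->] | lt_xn].
  exact: ltn_ord.
by exists ((s^-1)%g (Ordinal lt_xn)); rewrite ?mem_enum ?permKV.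
Qed.

Lemma card_untangled_perm n :
  #|[pred s : 'S_n | untangled n (word_of s)]| = count_untangled n (iota 0 n).
Proof.
apply: card_preim_count => [s1 s2 /word_of_inj/permP // | s | ].
  exact: word_of_perm_in_permutations.
by rewrite size_permutations ?iota_uniq // size_iota card_Sn.
Qed.

Lemma mem_drop_word_of n (s : 'S_n) t (i : 'I_n) :
  (val (s i) \in drop t (word_of s)) = (t <= i).
Proof.
rewrite /word_of -map_drop (mem_map (f := fun i => val (s i))); last first.
  by move=> x y /val_inj/perm_inj.
rewrite -(mem_map val_inj) map_drop val_enum_ord drop_iota mem_iota.
by case: i => i lt_in /=; lia.
Qed.

(* Positions i, j carry the "2" and "4" and positions k, l the "1" and "3" of
   one of the patterns 2413, 2431, 4213, 4231. *)
Definition rect_pattern n (s : 'S_n) : Prop :=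
  exists i j k l : 'I_n, [/\ i < k, i < l, j < k, j < l &
    [/\ s k < s i, s i < s l & s l < s j]].

Lemma interleaved_suffix_rect_pattern n (s : 'S_n) :
  (exists t, interleaved n (drop t (word_of s))) <-> rect_pattern s.
Proof.
split=> [[t /interleavedP [a [b [c [d [ab bc cd lt_dn]]]]]] | ].
  have lt_an : a < n by lia.
  have lt_bn : b < n by lia.
  have lt_cn : c < n by lia.
  pose pos x (lt_xn : x < n) := (s^-1)%g (Ordinal lt_xn).
  have val_pos x lt_xn : val (s (pos x lt_xn)) = x by rewrite permKV.
  rewrite -(val_pos a lt_an) -(val_pos b lt_bn) -(val_pos c lt_cn) -(val_pos d lt_dn).
  rewrite !mem_drop_word_of -!ltnNge => -[ta bt tc dt].
  exists (pos b lt_bn), (pos d lt_dn), (pos a lt_an), (pos c lt_cn).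
  by rewrite !val_pos; split; [lia | lia | lia | lia | split].
move=> [i [j [k [l [ik il jk jl [ki il' lj]]]]]].
exists (minn k l); apply/interleavedP; exists (s k), (s i), (s l), (s j).
by rewrite !mem_drop_word_of; split=> //; split; lia.
Qed.

Lemma contains_patternP n (s : 'S_n) (p : seq nat) :
  reflect (exists g : 'I_(size p) -> 'I_n,
             (forall a b : 'I_(size p), a < b -> g a < g b) /\
             (forall a b, (s (g a) < s (g b)) = (nth 0 p a < nth 0 p b)))
          (contains_pattern s p).
Proof.
apply: (iffP existsP) => [[g /andP [/forallP g_incr /forallP g_iso]] |
                         [g [g_incr g_iso]]].
  exists g; split=> a b; first by move: (g_incr a) => /forallP /(_ b) /implyP.
  by move: (g_iso a) => /forallP /(_ b) /eqP.
exists (finfun g); apply/andP; split; apply/forallP => a; apply/forallP => b;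
  by rewrite !ffunE ?g_iso //; apply/implyP/g_incr.
Qed.

Lemma contains_rect_pattern n (s : 'S_n) (p : seq nat) (i j k l : 'I_(size p)) :
  contains_pattern s p -> i < k -> i < l -> j < k -> j < l ->
  [/\ nth 0 p k < nth 0 p i, nth 0 p i < nth 0 p l & nth 0 p l < nth 0 p j] ->
  rect_pattern s.
Proof.
move=> /contains_patternP [g [g_incr g_iso]] ik il jk jl [ki il' lj].
by exists (g i), (g j), (g k), (g l); split; rewrite ?g_incr ?g_iso.
Qed.

Lemma rect_pattern_contains n (s : 'S_n) : rect_pattern s ->
  [|| contains_pattern s [:: 2; 4; 1; 3], contains_pattern s [:: 2; 4; 3; 1],
      contains_pattern s [:: 4; 2; 1; 3] | contains_pattern s [:: 4; 2; 3; 1]].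
Proof.
move=> [i [j [k [l [ik il jk jl [ki il' lj]]]]]].
have [lt_ij | lt_ji | /val_inj eq_ij] := ltngtP i j; last by rewrite eq_ij in il'; lia.
all: have [lt_kl | lt_lk | /val_inj eq_kl] := ltngtP k l;
  last by rewrite eq_kl in ki; lia.
all: apply/or4P.
- apply: Or41; apply/contains_patternP; exists (fun a => nth i [:: i; j; k; l] a).
  by split=> -[[|[|[|[|?]]]] ?] [[|[|[|[|?]]]] ?] //=; lia.
- apply: Or42; apply/contains_patternP; exists (fun a => nth i [:: i; j; l; k] a).
  by split=> -[[|[|[|[|?]]]] ?] [[|[|[|[|?]]]] ?] //=; lia.
- apply: Or43; apply/contains_patternP; exists (fun a => nth j [:: j; i; k; l] a).
  by split=> -[[|[|[|[|?]]]] ?] [[|[|[|[|?]]]] ?] //=; lia.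
- apply: Or44; apply/contains_patternP; exists (fun a => nth j [:: j; i; l; k] a).
  by split=> -[[|[|[|[|?]]]] ?] [[|[|[|[|?]]]] ?] //=; lia.
Qed.

Lemma rectangularP n (s : 'S_n) : reflect (~ rect_pattern s) (rectangular s).
Proof.
rewrite /rectangular /avoids -!negb_or.
apply: (iffP negP) => [no_contains /rect_pattern_contains // | no_rect].
case/or4P => c; apply: no_rect.
- by apply: (contains_rect_pattern (p := [:: 2; 4; 1; 3])
    (i := Ordinal (isT : 0 < 4)) (j := Ordinal (isT : 1 < 4))
    (k := Ordinal (isT : 2 < 4)) (l := Ordinal (isT : 3 < 4)) c).
- by apply: (contains_rect_pattern (p := [:: 2; 4; 3; 1])
    (i := Ordinal (isT : 0 < 4)) (j := Ordinal (isT : 1 < 4))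
    (k := Ordinal (isT : 3 < 4)) (l := Ordinal (isT : 2 < 4)) c).
- by apply: (contains_rect_pattern (p := [:: 4; 2; 1; 3])
    (i := Ordinal (isT : 1 < 4)) (j := Ordinal (isT : 0 < 4))
    (k := Ordinal (isT : 2 < 4)) (l := Ordinal (isT : 3 < 4)) c).
- by apply: (contains_rect_pattern (p := [:: 4; 2; 3; 1])
    (i := Ordinal (isT : 1 < 4)) (j := Ordinal (isT : 0 < 4))
    (k := Ordinal (isT : 3 < 4)) (l := Ordinal (isT : 2 < 4)) c).
Qed.

Lemma rectangular_untangled n (s : 'S_n) : rectangular s = untangled n (word_of s).
Proof.
apply/rectangularP/untangledP => [no_rect t | untangled_s].
  by apply/negP => it; apply/no_rect/interleaved_suffix_rect_pattern; exists t.
by move=> /interleaved_suffix_rect_pattern [t]; apply/negP.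
Qed.

Lemma card_rectangular n : #|[pred s : 'S_n | rectangular s]| = block_count n 0.
Proof.
rewrite (eq_card (B := [pred s : 'S_n | untangled n (word_of s)])); last first.
  by move=> s; rewrite !inE rectangular_untangled.
rewrite card_untangled_perm (_ : iota 0 n = blocks 0 0 0 n); last first.
  by rewrite /blocks /index_iota !subn0.
by rewrite count_untangled_blocks // !subn0.
Qed.

Theorem theorem8p1 (n : nat) (hn : 1 <= n) :
  exists f : {w : {ffun 'I_(2 * n - 2).+1 -> 'I_7} | closed_walk_v4 w} ->
             {s : 'S_n | rectangular s},
    bijective f.
Proof.
apply: card_eq_bijective; rewrite !card_sig card_closed_walks card_rectangular.
case: n hn => // m _; rewrite (_ : 2 * m.+1 - 2 = 2 * m); last by lia.
exact: walks_to_v4_block_count.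
Qed.
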